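(* Let $\kappa\geq\aleph_1$ and let $\Omega$ be a complete semiring. The contraction $\mathcal{C}:\mathrm{Trisk}_\Omega(\mathbf{Set}_\kappa)\to\mathrm{Rel}_\Omega(\mathbf{Set}_\kappa)$ is a strict monoidal functor for both monoidal structures, i.e. $\mathcal{C}(T\otimes T')=\mathcal{C}(T)\otimes\mathcal{C}(T')$ and $\mathcal{C}(T\oplus T')=\mathcal{C}(T)\oplus\mathcal{C}(T')$ for all triskells $T,T'$.
   Context: $\mathbf{Set}_\kappa$ is the category of sets of cardinality less than $\kappa$. A complete semiring is a semiring in which sums of arbitrary families are defined. A triskell from $S$ to $T$ with weights in $\Omega$ (using its multiplicative monoid) is a tuple $(E,S,T,\Omega,s,t,w)$ with $s:E\to S$, $t:E\to T$, $w:E\to\Omega$. Composition of $(E,S,T,\Omega,s,t,w)$ and $(E',T,T',\Omega,s',t',w')$ has edge set $\{(e,e')\in E\times E': t(e)=s'(e')\}$, source $s(e)$, target $t'(e')$, weight $w(e)w'(e')$; $\mathrm{Trisk}_\Omega(\mathbf{Set}_\kappa)$ has sets as objects and triskells up to isomorphism as morphisms. On triskells, $T\otimes T'=(E\times E',S\times S',T\times T',\Omega,s\times s',t\times t',(e,e')\mapsto w(e)w'(e'))$ and $T\oplus T'=(E+E',S+S',T+T',\Omega,s+s',t+t',(w,w'))$. $\mathrm{Rel}_\Omega(\mathbf{Set}_\kappa)$ has sets as objects, morphisms $A\to B$ the matrices $M=(m_{a,b})\in\Omega^{A\times B}$, composite of $M:A\to B$ and $N:B\to C$ given by $(a,c)\mapsto\sum_{b\in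 B}m_{a,b}n_{b,c}$, identity matrices as identities; $(M\otimes M')_{(a,a'),(b,b')}=m_{a,b}m'_{a',b'}$ and $M\oplus M'$ is the block-diagonal matrix on $(A+A')\times(B+B')$. The contraction functor $\mathcal{C}$ is the identity on objects and sends a triskell $T=(E,A,B,\Omega,s,t,w)$ to the matrix $\mathcal{C}(T)_{a,b}=\sum_{e\in E,\ s(e)=a,\ t(e)=b}w(e)$. *)

From mathcomp Require Import all_boot all_algebra.
Set Implicit Arguments. Unset Strict Implicit. Unset Printing Implicit Defensive.
Import GRing.Theory.
Local Open Scope ring_scope.

(* ---------- Cardinals: κ is represented by a set (type) K of cardinality κ ---------- *)
Definition card_lt (A K : Type) : Prop :=
  (exists f : A -> K, injective f) /\ ~ (exists g : K -> A, injective g).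
Definition uncountable (K : Type) : Prop := ~ (exists g : K -> nat, injective g).

Record complete_sum (R : pzSemiRingType) := CompleteSum {
  csum : forall I : Type, (I -> R) -> R;
  csum_empty : forall (I : Type) (f : I -> R), (I -> False) -> csum f = 0;
  csum_single : forall (I : Type) (i0 : I) (f : I -> R),
      (forall i, i = i0) -> csum f = f i0;
  csum_pair : forall f : bool -> R, csum f = f true + f false;
  csum_reindex : forall (I J : Type) (g : I -> J) (f : J -> R),
      bijective g -> csum (fun i => f (g i)) = csum f;
  csum_partition : forall (I : Type) (J : I -> Type) (f : forall i, J i -> R),
      csum (fun p : {i : I & J i} => f (projT1 p) (projT2 p))
      = csum (fun i => csum (f i));
  csum_mull : forall (I : Type) (f : I -> R) (b : R),
      csum f * b = csum (fun i => f i * b);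
  csum_mulr : forall (I : Type) (f : I -> R) (b : R),
      b * csum f = csum (fun i => b * f i)
}.

Record triskell (R : Type) (S T : Type) := Triskell {
  edge : Type;
  src : edge -> S;
  tgt : edge -> T;
  weight : edge -> R
}.
Arguments Triskell {R S T edge}.

Definition trisk_in_Set (K : Type) (R : Type) (S T : Type) (t : triskell R S T) :=
  [/\ card_lt (edge t) K, card_lt S K & card_lt T K].

Definition trisk_tensor (R : pzSemiRingType) (S T S' T' : Type)
  (t : triskell R S T) (t' : triskell R S' T') : triskell R (S * S') (T * T') :=
  @Triskell R (S * S') (T * T') (edge t * edge t')
    (fun e => (src e.1, src e.2)) (fun e => (tgt e.1, tgt e.2))
    (fun e => weight e.1 * weight e.2).

Definition trisk_dsum (R : Type) (S T S' T' : Type)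
  (t : triskell R S T) (t' : triskell R S' T') : triskell R (S + S') (T + T') :=
  @Triskell R (S + S') (T + T') (edge t + edge t')
    (fun e => match e with inl x => inl (src x) | inr y => inr (src y) end)
    (fun e => match e with inl x => inl (tgt x) | inr y => inr (tgt y) end)
    (fun e => match e with inl x => weight x | inr y => weight y end).

Definition rel_tensor (R : pzSemiRingType) (A B A' B' : Type)
  (M : A -> B -> R) (M' : A' -> B' -> R) : (A * A') -> (B * B') -> R :=
  fun a b => M a.1 b.1 * M' a.2 b.2.

Definition rel_dsum (R : pzSemiRingType) (A B A' B' : Type)
  (M : A -> B -> R) (M' : A' -> B' -> R) : (A + A') -> (B + B') -> R :=
  fun a b => match a, b with
             | inl x, inl y => M x y
             | inr x, inr y => M' x y
             | _, _ => 0
             end.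

Definition contraction (R : pzSemiRingType) (cs : complete_sum R) (A B : Type)
  (t : triskell R A B) : A -> B -> R :=
  fun a b => csum cs (fun e : {e : edge t | src e = a /\ tgt e = b} => weight (proj1_sig e)).

From mathcomp Require Import all_boot all_algebra.
From Stdlib Require Import ClassicalEpsilon ProofIrrelevance FunctionalExtensionality.
Set Implicit Arguments. Unset Strict Implicit. Unset Printing Implicit Defensive.
Local Open Scope ring_scope.

(* Both identities are reindexings of complete sums.  The edges of [t ⊗ t']
   from [(a, a')] to [(b, b')] are exactly the pairs of an edge of [t] from [a]
   to [b] and an edge of [t'] from [a'] to [b'], so distributivity of [csum]
   turns the sum over them into a product of sums.  The edges of [t ⊕ t']
   from [inl a] to [inl b] are the injected edges of [t] (symmetrically for
   [inr]), and there are no edges between different summands. *)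

Lemma bijective_of_inj_surj (I J : Type) (g : I -> J) :
  injective g -> (forall z, exists x, g x = z) -> bijective g.
Proof.
move=> g_inj g_surj.
exists (fun z => proj1_sig (constructive_indefinite_description _ (g_surj z))).
- move=> x; apply: g_inj.
  exact: proj2_sig (constructive_indefinite_description _ (g_surj (g x))).
- by move=> z; exact: proj2_sig (constructive_indefinite_description _ (g_surj z)).
Qed.

Lemma sig_inj (A : Type) (P : A -> Prop) (x y : {a | P a}) :
  proj1_sig x = proj1_sig y -> x = y.
Proof.
case: x => a pa; case: y => b pb /= eab; subst b.
by rewrite (proof_irrelevance _ pa pb).
Qed.

Section CompleteSums.

Variables (R : pzSemiRingType) (cs : complete_sum R).

Lemma eq_csum (I : Type) (f g : I -> R) :
  (forall i, f i = g i) -> csum cs f = csum cs g.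
Proof. by move=> efg; rewrite (functional_extensionality _ _ efg). Qed.

Lemma csum_mul_prod (I J : Type) (f : I -> R) (g : J -> R) :
  csum cs (fun p : I * J => f p.1 * g p.2) = csum cs f * csum cs g.
Proof.
rewrite (csum_mull cs).
under [RHS]eq_csum => i do rewrite (csum_mulr cs).
rewrite -(csum_partition cs (fun i (j : J) => f i * g j)).
pose pair_sigT (p : I * J) : {i : I & J} := existT _ p.1 p.2.
rewrite -(csum_reindex cs (g := pair_sigT)) //.
by exists (fun q : {i : I & J} => (projT1 q, projT2 q)) => [[]|[]].
Qed.

Lemma csum_sig_reindex (A B : Type) (P : A -> Prop) (Q : B -> Prop)
    (g : A -> B) (f : A -> R) (f' : B -> R) :
  injective g -> (forall a, P a -> Q (g a)) ->
  (forall b, Q b -> exists2 a, P a & g a = b) -> (forall a, f' (g a) = f a) ->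
  csum cs (fun x : {a | P a} => f (proj1_sig x))
  = csum cs (fun y : {b | Q b} => f' (proj1_sig y)).
Proof.
move=> g_inj PQ QP f'g.
pose h (x : {a | P a}) : {b | Q b} := exist _ (g (proj1_sig x)) (PQ _ (proj2_sig x)).
rewrite -(csum_reindex cs (g := h)); first by apply: eq_csum => x; rewrite f'g.
apply: bijective_of_inj_surj => [x y /(f_equal (@proj1_sig _ _)) /g_inj|].
  exact: sig_inj.
move=> [b Qb]; have [a Pa gab] := QP _ Qb.
by exists (exist _ a Pa); exact: sig_inj.
Qed.

Lemma csum_sig_prod (A B : Type) (P : A -> Prop) (Q : B -> Prop)
    (f : A -> R) (g : B -> R) :
  csum cs (fun z : {p : A * B | P p.1 /\ Q p.2} =>
             f (proj1_sig z).1 * g (proj1_sig z).2)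
  = csum cs (fun x : {a | P a} => f (proj1_sig x))
    * csum cs (fun y : {b | Q b} => g (proj1_sig y)).
Proof.
rewrite -csum_mul_prod.
pose h (p : {a | P a} * {b | Q b}) : {p : A * B | P p.1 /\ Q p.2} :=
  exist _ (proj1_sig p.1, proj1_sig p.2) (conj (proj2_sig p.1) (proj2_sig p.2)).
rewrite -(csum_reindex cs (g := h)) //.
exists (fun z : {p : A * B | P p.1 /\ Q p.2} =>
  (exist P _ (proj1 (proj2_sig z)), exist Q _ (proj2 (proj2_sig z)))).
- by move=> [x y]; congr pair; exact: sig_inj.
- by move=> [[a b] ?]; exact: sig_inj.
Qed.

End CompleteSums.

Section Contraction.

Variables (R : pzSemiRingType) (cs : complete_sum R).
Variables (S T S' T' : Type) (t : triskell R S T) (t' : triskell R S' T').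

Lemma contraction_tensor a b :
  contraction cs (trisk_tensor t t') a b
  = contraction cs t a.1 b.1 * contraction cs t' a.2 b.2.
Proof.
case: a b => [a a'] [b b']; rewrite /contraction /= -csum_sig_prod.
pose w (e : edge t * edge t') := weight e.1 * weight e.2.
apply: (csum_sig_reindex cs (g := id) (f := w) (f' := w)) => // -[e e'] /=.
- by case=> [[-> ->] [-> ->]].
- by move=> [[<- <-] [<- <-]]; exists (e, e').
Qed.

Lemma contraction_dsum_inl a b :
  contraction cs (trisk_dsum t t') (inl a) (inl b) = contraction cs t a b.
Proof.
rewrite /contraction; symmetry.
apply: (csum_sig_reindex cs (g := inl)) => //.
- by move=> x y [].
- by move=> e [<- <-].
- by case=> e /= [] // [<-] [<-]; exists e.
Qed.

Lemma contraction_dsum_inr a b :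
  contraction cs (trisk_dsum t t') (inr a) (inr b) = contraction cs t' a b.
Proof.
rewrite /contraction; symmetry.
apply: (csum_sig_reindex cs (g := inr)) => //.
- by move=> x y [].
- by move=> e [<- <-].
- by case=> e /= [] // [<-] [<-]; exists e.
Qed.

Lemma contraction_dsum a b :
  contraction cs (trisk_dsum t t') a b
  = rel_dsum (contraction cs t) (contraction cs t') a b.
Proof.
case: a b => a [] b /=.
- exact: contraction_dsum_inl.
- by apply: csum_empty => -[[e|e] /= [[]]].
- by apply: csum_empty => -[[e|e] /= [[]]].
- exact: contraction_dsum_inr.
Qed.

End Contraction.

(* The size bounds [hK], [ht], [ht'] only say that the data live in [Set_κ];
   the identities hold for triskells over arbitrary types. *)
Theorem theorem14 (K : Type) (hK : uncountable K)
  (R : pzSemiRingType) (cs : complete_sum R)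
  (S T S' T' : Type) (t : triskell R S T) (t' : triskell R S' T')
  (ht : trisk_in_Set K t) (ht' : trisk_in_Set K t') :
  contraction cs (trisk_tensor t t') = rel_tensor (contraction cs t) (contraction cs t')
  /\ contraction cs (trisk_dsum t t') = rel_dsum (contraction cs t) (contraction cs t').
Proof.
split; do 2 apply: functional_extensionality => ?.
- exact: contraction_tensor.
- exact: contraction_dsum.
Qed.
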